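(* Let $\mu$ be a distribution over $\{0,1\}^V$ and $\theta\in(0,1)$. Let $\pi^{(t)}_{\mathrm{GD}}$ be the law at time $t$ of the Glauber dynamics on $\pi$ started from $\mathsf{lift}(\mathbf 1_V)$, i.e. $\pi^{(0)}_{\mathrm{GD}}$ is the law of $\mathsf{lift}(\mathbf 1_V)$ and $\pi^{(t)}_{\mathrm{GD}}=\pi^{(t-1)}_{\mathrm{GD}}P_{\pi\text{-GD}}$. Then for every $t\ge0$, $\pi^{(t)}_{\mathrm{GD}}P_{\mathrm{cl}}=\pi^{(t)}_{\mathrm{GD}}$.
   Context: $\mathsf{lift}$: random map $\{0,1\}^V\to\{0,1,\star\}^V$, independently per coordinate $0\mapsto0$, $1\mapsto\star$ w.p. $1-\theta$, $1\mapsto1$ w.p. $\theta$. $\mathsf{contr}:\{0,1,\star\}^V\to\{0,1\}^V$: $0\mapsto0$, $1,\star\mapsto1$ coordinatewise. $\pi$ is the law of $\mathsf{lift}(X)$ for $X\sim\mu$, with support $\Omega(\pi)$. $P_{\pi\text{-GD}}$ is the Glauber dynamics on $\pi$: pick $v$ uniformly, resample $X_v$ from $\pi$ conditioned on $X_{V\setminus\{v\}}$. $P_{\mathrm{cl}}$ is the Markov chain sending $X$ to the random configuration $\mathsf{lift}(\mathsf{contr}(X))$. Distributions are row vectors acting on transition matrices from the left. *)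

From HB Require Import structures.
From mathcomp Require Import all_boot all_order all_algebra.
Set Implicit Arguments. Unset Strict Implicit. Unset Printing Implicit Defensive.
Import Order.TTheory GRing.Theory Num.Theory.
Local Open Scope ring_scope.

(* Spins {0,1,star} encoded as option bool:
   Some false = 0, Some true = 1, None = star. *)
Definition spin := option bool.
Notation s0 := (Some false : spin).
Notation s1 := (Some true : spin).
Notation sstar := (None : spin).

Section Defs.
Variables (R : realFieldType) (V : finType).

Definition cfg01 := {ffun V -> bool}.
Definition cfg3 := {ffun V -> spin}.

Definition step (S : finType) (nu : S -> R) (P : S -> S -> R) : S -> R :=
  fun y => \sum_(x : S) nu x * P x y.

Definition lift1 (theta : R) (b : bool) (s : spin) : R :=
  if b then (if s == s1 then theta else if s == sstar then 1 - theta else 0)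
  else (if s == s0 then 1 else 0).

Definition liftK (theta : R) (x : cfg01) (y : cfg3) : R :=
  \prod_(v : V) lift1 theta (x v) (y v).

Definition contr (y : cfg3) : cfg01 := [ffun v => y v != s0].

Definition pi_lift (mu : cfg01 -> R) (theta : R) (y : cfg3) : R :=
  \sum_(x : cfg01) mu x * liftK theta x y.

Definition agree_off (v : V) (x y : cfg3) : bool :=
  [forall u : V, (u != v) ==> (y u == x u)].

(* Convention: if the conditioning event has p-mass 0, the chain stays put. *)
Definition glauber (p : cfg3 -> R) (x y : cfg3) : R :=
  #|V|%:R^-1 * \sum_(v : V)
    (if agree_off v x y then
       (let Z := \sum_(z : cfg3 | agree_off v x z) p z in
        if Z != 0 then p y / Z else (y == x)%:R)
     else 0).

Definition Pcl (theta : R) (x y : cfg3) : R := liftK theta (contr x) y.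

Definition ones : cfg01 := [ffun _ => true].

Definition piGD (mu : cfg01 -> R) (theta : R) (t : nat) : cfg3 -> R :=
  iter t (fun nu => step nu (glauber (pi_lift mu theta))) (liftK theta ones).

End Defs.

(* Say that nu is a lift if nu(y) = g(contr y) * W(y), where W(y) is the product
   over v of the weights W(y_v), with W(0) = 1, W(1) = theta, W(star) = 1 - theta
   ([cfg_weight], [spin_weight]); equivalently nu is
   the law of lift(X) for a signed measure X ~ g on {0,1}^V. Since contr (lift x) = x,
   P_cl fixes every lift. The initial law is the lift of the point mass at 1_V, and
   pi is the lift of mu. Resampling site v of a lift of g from pi gives the lift of
   g resampled at v from mu: for b = contr y, the pi-mass of the configurations
   agreeing with y off v is (mu(b[v<-0]) + mu(b[v<-1])) * prod_(u != v) W(y_u).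
   Hence every Glauber iterate is a lift and is fixed by P_cl. *)
From Pilot Require Import Defs.
From HB Require Import structures.
From mathcomp Require Import all_boot all_order all_algebra.
From mathcomp Require Import ring.
From Stdlib Require Import FunctionalExtensionality.
Set Implicit Arguments. Unset Strict Implicit. Unset Printing Implicit Defensive.
Import Order.TTheory GRing.Theory Num.Theory.
Local Open Scope ring_scope.

Definition ffun_set (V : finType) (T : Type) (f : {ffun V -> T}) (v : V) (a : T) :
    {ffun V -> T} :=
  [ffun u => if u == v then a else f u].

Section FfunSet.
Variables (V : finType) (T : eqType).
Implicit Types (f g : {ffun V -> T}) (v : V) (a : T).

Lemma ffun_set_id f v : ffun_set f v (f v) = f.
Proof. by apply/ffunP => u; rewrite ffunE; case: eqP => // ->. Qed.

Lemma eq_ffun_set f g v a :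
  (g == ffun_set f v a) = [forall u, (u != v) ==> (g u == f u)] && (g v == a).
Proof.
apply/eqP/andP => [->|[/forallP agree /eqP gv]].
  rewrite ffunE eqxx; split => //.
  by apply/forallP => u; apply/implyP => /negbTE uv; rewrite ffunE uv.
apply/ffunP => u; rewrite ffunE; case: eqP => [->|/eqP uv] //.
by move: (agree u); rewrite uv => /eqP.
Qed.

End FfunSet.

Section Configurations.
Variables (R : realFieldType) (V : finType).
Implicit Types (x y z : cfg3 V) (v : V).

Lemma agree_offC v x y : agree_off v x y = agree_off v y x.
Proof. by apply: eq_forallb => u; case: (u != v); rewrite //= eq_sym. Qed.

Lemma agree_off_refl v x : agree_off v x x.
Proof. by apply/forallP => u; apply/implyP. Qed.

Lemma agree_off_set v y s z : agree_off v (ffun_set y v s) z = agree_off v y z.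
Proof.
by apply: eq_forallb => u; case: (boolP (u != v)) => //= /negbTE uv; rewrite ffunE uv.
Qed.

Lemma sum_spin (F : spin -> R) : \sum_(s : spin) F s = F sstar + F s1 + F s0.
Proof.
rewrite (bigD1 sstar) // (bigD1 s1) // (bigD1 s0) //= big1 ?addr0 ?addrA //.
by case=> [[]|].
Qed.

Lemma sum_agree_off (F : cfg3 V -> R) v y :
  \sum_(x | agree_off v y x) F x = \sum_(s : spin) F (ffun_set y v s).
Proof.
transitivity (\sum_(s : spin) \sum_(x | x == ffun_set y v s) F x); last first.
  by apply: eq_bigr => s _; rewrite big_pred1_eq.
rewrite (exchange_big_dep predT) //= big_mkcond /=; apply: eq_bigr => x _.
have eq_set s : (x == ffun_set y v s) = agree_off v y x && (x v == s).
  by rewrite eq_ffun_set.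
case: ifP => agree; last by rewrite big_pred0 // => s; rewrite eq_set agree.
by rewrite (eq_bigl (pred1 (x v))) ?big_pred1_eq // => s; rewrite eq_set agree eq_sym.
Qed.

Lemma contr_set y v s : contr (ffun_set y v s) = ffun_set (contr y) v (s != s0).
Proof. by apply/ffunP => u; rewrite !ffunE; case: (u == v). Qed.

End Configurations.

Section Lifts.
Variables (R : realFieldType) (V : finType) (theta : R).
Implicit Types (b : cfg01 V) (y : cfg3 V) (v : V) (g mu : cfg01 V -> R).

Definition spin_weight (s : spin) : R := lift1 theta (s != s0) s.

Definition cfg_weight y : R := \prod_(u : V) spin_weight (y u).

Definition cfg_weight_off y v : R := \prod_(u | u != v) spin_weight (y u).

Definition lift_meas g y : R := g (contr y) * cfg_weight y.

Lemma lift1E (c : bool) (s : spin) :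
  lift1 theta c s = ((s != s0) == c)%:R * spin_weight s.
Proof. by case: c; case: s => [[]|]; rewrite /spin_weight /= ?mul1r ?mul0r. Qed.

Lemma liftK_contr b y : Defs.liftK theta b y = (contr y == b)%:R * cfg_weight y.
Proof.
rewrite /Defs.liftK; under eq_bigr do rewrite lift1E.
rewrite big_split /=; congr (_ * _).
have [<-|contr_neq] := eqVneq (contr y) b.
  by rewrite big1 // => u _; rewrite ffunE eqxx.
have [u u_neq] : exists u, (y u != s0) != b u.
  apply/existsP; apply: contraNT contr_neq; rewrite negb_exists => /forallP eq_u.
  by apply/eqP/ffunP => u; rewrite ffunE; move/negPn/eqP: (eq_u u).
by rewrite (bigD1 u) //= (negbTE u_neq) mul0r.
Qed.

Lemma sum_liftK b : \sum_(y : cfg3 V) Defs.liftK theta b y = 1.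
Proof.
rewrite /Defs.liftK -(bigA_distr_bigA (fun u s => lift1 theta (b u) s)) /=.
apply: big1 => u _; rewrite sum_spin /lift1.
by case: (b u); rewrite /= ?addr0 ?subrK ?add0r.
Qed.

Lemma pi_liftE mu y : pi_lift mu theta y = lift_meas mu y.
Proof.
rewrite /pi_lift (bigD1 (contr y)) //= big1 ?addr0 => [|b /negbTE contr_neq].
  by rewrite liftK_contr eqxx mul1r.
by rewrite liftK_contr eq_sym contr_neq mul0r mulr0.
Qed.

Lemma cfg_weight_off_split y v : cfg_weight y = spin_weight (y v) * cfg_weight_off y v.
Proof. by rewrite /cfg_weight (bigD1 v). Qed.

Lemma cfg_weight_set y v s :
  cfg_weight (ffun_set y v s) = spin_weight s * cfg_weight_off y v.
Proof.
rewrite (cfg_weight_off_split _ v) ffunE eqxx; congr (_ * _).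
by apply: eq_bigr => u /negbTE uv; rewrite ffunE uv.
Qed.

Lemma sum_lift_meas_set g y v :
  \sum_(s : spin) lift_meas g (ffun_set y v s) =
  (g (ffun_set (contr y) v false) + g (ffun_set (contr y) v true)) * cfg_weight_off y v.
Proof.
by rewrite sum_spin /lift_meas !contr_set !cfg_weight_set /spin_weight /lift1 /=; ring.
Qed.

Lemma step_Pcl_lift g : step (lift_meas g) (Pcl theta) = lift_meas g.
Proof.
apply: functional_extensionality => y.
transitivity (\sum_(x : cfg3 V) lift_meas g y * Defs.liftK theta (contr y) x).
  apply: eq_bigr => x _; rewrite /Pcl /lift_meas !liftK_contr.
  by have [->|_] := eqVneq (contr y) (contr x); rewrite ?mul0r ?mulr0 //; ring.
by rewrite -mulr_sumr sum_liftK mulr1.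
Qed.

Definition site_update mu v g b : R :=
  let M := mu (ffun_set b v false) + mu (ffun_set b v true) in
  if M != 0 then mu b * (g (ffun_set b v false) + g (ffun_set b v true)) / M
  else g b.

Definition glauber_at (p : cfg3 V -> R) v (x y : cfg3 V) : R :=
  if agree_off v x y then
    (let Z := \sum_(z : cfg3 V | agree_off v x z) p z in
     if Z != 0 then p y / Z else (y == x)%:R)
  else 0.

Lemma glauberE (p : cfg3 V -> R) x y :
  glauber p x y = #|V|%:R^-1 * \sum_v glauber_at p v x y.
Proof. by []. Qed.

Lemma step_glauber (nu p : cfg3 V -> R) y :
  step nu (glauber p) y = #|V|%:R^-1 * \sum_v step nu (glauber_at p v) y.
Proof.
rewrite /step; under eq_bigr do rewrite glauberE mulrCA mulr_sumr.
by rewrite -mulr_sumr exchange_big.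
Qed.

Lemma normaliser_lift mu v y s :
  \sum_(z | agree_off v (ffun_set y v s) z) pi_lift mu theta z =
  (mu (ffun_set (contr y) v false) + mu (ffun_set (contr y) v true))
    * cfg_weight_off y v.
Proof.
under eq_bigl do rewrite agree_off_set.
by rewrite sum_agree_off; under eq_bigr do rewrite pi_liftE; rewrite sum_lift_meas_set.
Qed.

Lemma step_glauber_at_lift mu g v y :
  step (lift_meas g) (glauber_at (pi_lift mu theta) v) y =
  lift_meas (site_update mu v g) y.
Proof.
rewrite /step /glauber_at.
under eq_bigr do rewrite (fun_if (fun k => lift_meas g _ * k)) mulr0.
rewrite -big_mkcond /= (eq_bigl (agree_off v y)) => [|x]; last by rewrite agree_offC.
rewrite sum_agree_off; under eq_bigr do rewrite normaliser_lift.
rewrite /site_update /lift_meas; set M := _ + _; set w := cfg_weight_off y v.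
have [Mw0|Mw_neq0] := eqVneq (M * w) 0; last first.
  have [M_neq0 w_neq0] : M != 0 /\ w != 0 by apply/andP; rewrite -negb_or -mulf_eq0.
  rewrite -mulr_suml sum_lift_meas_set pi_liftE /lift_meas M_neq0 -/w.
  by field; rewrite M_neq0 w_neq0.
(* The chain stays put; if M != 0 then w = 0, so the lift vanishes at y. *)
rewrite (bigD1 (y v)) //= big1 => [|s /negbTE s_neq]; last first.
  by rewrite eq_ffun_set -/(agree_off v y y) agree_off_refl eq_sym s_neq mulr0.
rewrite ffun_set_id eqxx mulr1 addr0.
case: ifPn => // M_neq0; suff -> : cfg_weight y = 0 by rewrite !mulr0.
move/eqP: Mw0; rewrite mulf_eq0 (negbTE M_neq0) /= => /eqP w0.
by rewrite (cfg_weight_off_split _ v) -/w w0 mulr0.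
Qed.

Lemma step_glauber_lift mu g :
  step (lift_meas g) (glauber (pi_lift mu theta)) =
  lift_meas (fun b => #|V|%:R^-1 * \sum_v site_update mu v g b).
Proof.
apply: functional_extensionality => y; rewrite step_glauber /lift_meas.
under eq_bigr do rewrite step_glauber_at_lift.
by rewrite -mulrA mulr_suml.
Qed.

Lemma piGD_lift mu t : exists g, piGD mu theta t = lift_meas g.
Proof.
elim: t => [|t [g IH]].
  exists (fun b => (b == ones V)%:R).
  by apply: functional_extensionality => y; rewrite /piGD /= liftK_contr.
exists (fun b => #|V|%:R^-1 * \sum_v site_update mu v g b).
by rewrite /= IH step_glauber_lift.
Qed.

End Lifts.

Theorem lemma3p4 (R : realFieldType) (V : finType)
  (mu : cfg01 V -> R)
  (mu_ge0 : forall x, 0 <= mu x) (mu_sum1 : \sum_(x : cfg01 V) mu x = 1)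
  (theta : R) (theta_gt0 : 0 < theta) (theta_lt1 : theta < 1) (t : nat) :
  step (piGD mu theta t) (Pcl theta) = piGD mu theta t.
Proof.
have [g ->] := piGD_lift theta mu t.
exact: step_Pcl_lift.
Qed.
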